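(* Let $\mathbb{F}$ be the field of order $q$ ($q$ a prime power), and let $S\subset\mathbb{F}^\times$ be such that for all distinct $i,j\in S$ we have $i+j\neq0$ and $ij\neq-1$. For $i\in S$ let $$Z_i=\left[\begin{array}{ccc}1&0&0\\0&1&1\\ i&1&0\\ 0&i^{-1}&i\end{array}\right]$$ (the sudoku flag with datum $\Gamma_i=\begin{pmatrix}i&1\\0&i^{-1}\end{pmatrix}$, $\beta_i=i$). Then each $Z_i$ is a sudoku flag, and if $M_i$ is a sudoku solution generated by $Z_i$ for each $i\in S$, the collection $\{M_i\mid i\in S\}$ is a strongly orthogonal collection of sudoku solutions of order $q^2$ of size $|S|$.
   Context: Locations of a sudoku solution of order $q^2$ are identified with $(x_1,x_2,x_3,x_4)\in\mathbb{F}^4$: $x_1$ large row, $x_2$ row within the large row, $x_3$ large column, $x_4$ column within the large column; rows, columns and subsquares are the sets of locations with fixed $(x_1,x_2)$, $(x_3,x_4)$, $(x_1,x_3)$ respectively. A sudoku solution of order $q^2$ assigns symbols $\{0,\dots,q^2-1\}$ to locations so that each symbol occurs exactly once in every row, column and subsquare; two are orthogonal if upon superimposition each ordered pair of symbols occurs exactly once. Each symbol is $x=b_qq+b_1$ with radix digit $b_q$ and units digit $b_1$ in $\{0,\dots,q-1\}$; fix a bijection $\mathbb{F}\leftrightarrow\{0,\dots,q-1\}$ to record coordinates. A flag is a pair $(g,V)$ of subspaces of $\mathbb{F}^4$ with $\dim g=2$, $\dim V=3$, $g\subset V$; the notation $[v_1\ v_2\ v_3]$ (a $4\times3$ matrix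 with columns $v_1,v_2,v_3$) denotes $g=\langle v_1,v_2\rangle$, $V=\langle v_1,v_2,v_3\rangle$. It is a sudoku flag if every coset of $g$ meets every row, column and subsquare in exactly one location. A sudoku solution generated by a sudoku flag $(g,V)$ is a sudoku solution of order $q^2$ in which each coset of $g$ is exactly the set of locations of one symbol and each coset of $V$ is exactly the set of locations whose symbols have one given radix digit. An ordered orthogonal array $\mathrm{OOA}(4,s,2,v)$ is a $2s\times v^4$ array over an alphabet of size $v$ with rows labeled $(i,j)$, $1\le i\le s$, $j\in\{1,2\}$, such that for every top-justified set $T$ of $4$ rows ($(i,2)\in T\Rightarrow(i,1)\in T$) the subarray on the rows of $T$ contains each $4$-tuple exactly once as a column. For sudoku solutions $M_1,\dots,M_{m}$ of order $q^2$, the associated array is the $2(m+2)\times q^4$ array with one column per location $(x_1,x_2,x_3,x_4)$, with entries $x_1,x_2,x_3,x_4$ in rows $(1,1),(1,2),(2,1),(2,2)$ and the radix and units digits of the symbol of $M_k$ at that location in rows $(k+2,1),(k+2,2)$. A family of $m$ mutually orthogonal sudoku solutions is strongly orthogonal if its associated array is an $\mathrm{OOA}(4,m+2,2,q)$. *)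

From HB Require Import structures.
From mathcomp Require Import all_boot all_order all_algebra.
Set Implicit Arguments. Unset Strict Implicit. Unset Printing Implicit Defensive.
Import GRing.Theory.
Local Open Scope ring_scope.

(* Coordinates of a location x : 'rV[F]_4 are x c0, x c1, x c2, x c3,
   i.e. x_1 (large row), x_2 (row in large row), x_3 (large column),
   x_4 (column in large column). *)
Definition c0 : 'I_4 := @Ordinal 4 0 isT.
Definition c1 : 'I_4 := @Ordinal 4 1 isT.
Definition c2 : 'I_4 := @Ordinal 4 2 isT.
Definition c3 : 'I_4 := @Ordinal 4 3 isT.

Definition in_coset (F : fieldType) (m : nat) (A : 'M[F]_(m, 4)) (x y : 'rV[F]_4) : bool :=
  ((y - x) <= A)%MS.

Definition sudoku_flag (F : finFieldType) (m1 m2 : nat)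
  (g : 'M[F]_(m1, 4)) (V : 'M[F]_(m2, 4)) : Prop :=
  [/\ \rank g = 2%N, \rank V = 3%N, (g <= V)%MS &
   forall (x : 'rV[F]_4) (a b : F),
     [/\ #|[set y : 'rV[F]_4 | in_coset g x y & (y ord0 c0 == a) && (y ord0 c1 == b)]| = 1%N,
         #|[set y : 'rV[F]_4 | in_coset g x y & (y ord0 c2 == a) && (y ord0 c3 == b)]| = 1%N &
         #|[set y : 'rV[F]_4 | in_coset g x y & (y ord0 c0 == a) && (y ord0 c2 == b)]| = 1%N]].

Definition sudoku_solution (F : finFieldType) (M : 'rV[F]_4 -> 'I_(#|F| ^ 2)) : Prop :=
  forall (a b : F) (s : 'I_(#|F| ^ 2)),
    [/\ #|[set y : 'rV[F]_4 | (y ord0 c0 == a) && (y ord0 c1 == b) && (M y == s)]| = 1%N,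
        #|[set y : 'rV[F]_4 | (y ord0 c2 == a) && (y ord0 c3 == b) && (M y == s)]| = 1%N &
        #|[set y : 'rV[F]_4 | (y ord0 c0 == a) && (y ord0 c2 == b) && (M y == s)]| = 1%N].

Definition radix (F : finType) (s : 'I_(#|F| ^ 2)) : nat := (s %/ #|F|)%N.
Definition units (F : finType) (s : 'I_(#|F| ^ 2)) : nat := (s %% #|F|)%N.

Definition generated_by (F : finFieldType) (m1 m2 : nat)
  (g : 'M[F]_(m1, 4)) (V : 'M[F]_(m2, 4)) (M : 'rV[F]_4 -> 'I_(#|F| ^ 2)) : Prop :=
  [/\ sudoku_solution M,
      (forall x : 'rV[F]_4, exists s : 'I_(#|F| ^ 2),
          [set y : 'rV[F]_4 | in_coset g x y] = [set y : 'rV[F]_4 | M y == s]) &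
      (forall x : 'rV[F]_4, exists d : nat,
          [set y : 'rV[F]_4 | in_coset V x y] = [set y : 'rV[F]_4 | radix (M y) == d])].

Definition orthogonal (F : finFieldType) (M1 M2 : 'rV[F]_4 -> 'I_(#|F| ^ 2)) : Prop :=
  forall s t : 'I_(#|F| ^ 2), #|[set y : 'rV[F]_4 | (M1 y == s) && (M2 y == t)]| = 1%N.

(* Ordered orthogonal array OOA(4, s, 2, v): rows labelled (i, j), i : 'I_s,
   j : 'I_2 (j = 0 is "1", j = 1 is "2"), columns indexed by C. *)
Definition OOA4 (s v : nat) (C : finType) (A : 'I_s -> 'I_2 -> C -> nat) : Prop :=
  [/\ #|C| = (v ^ 4)%N,
      (forall i j c, A i j c < v)%N &
      forall T : {set 'I_s * 'I_2}, #|T| = 4%N ->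
        (forall i, (i, ord_max) \in T -> (i, ord0) \in T) ->
        forall f : 'I_s -> 'I_2 -> 'I_v,
          #|[set c | [forall r in T, A r.1 r.2 c == f r.1 r.2]]| = 1%N].

(* Associated array; rows 'I_(2 + m): the first two row-pairs are the
   coordinates (encoded via e), the remaining ones the digits of M k. *)
Definition assoc_array (F : finFieldType) (m : nat) (e : F -> 'I_#|F|)
  (M : 'I_m -> 'rV[F]_4 -> 'I_(#|F| ^ 2)) (i : 'I_(2 + m)) (j : 'I_2) (x : 'rV[F]_4) : nat :=
  match split i with
  | inl a => if val a == 0%N then (if val j == 0%N then e (x ord0 c0) else e (x ord0 c1))
             else (if val j == 0%N then e (x ord0 c2) else e (x ord0 c3))
  | inr k => if val j == 0%N then radix (M k x) else units (M k x)
  end.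

Definition strongly_orthogonal (F : finFieldType) (m : nat) (e : F -> 'I_#|F|)
  (M : 'I_m -> 'rV[F]_4 -> 'I_(#|F| ^ 2)) : Prop :=
  [/\ (forall k, sudoku_solution (M k)),
      (forall k l, k != l -> orthogonal (M k) (M l)) &
      OOA4 (#|F|) (assoc_array e M)].

(* The 4x3 matrix Z_i = [v1 v2 v3] *)
Definition Zmat (F : fieldType) (i : F) : 'M[F]_(4, 3) :=
  \matrix_(r < 4, c < 3)
    nth 0 (nth [::] [:: [:: 1; 0; 0]; [:: 0; 1; 1]; [:: i; 1; 0]; [:: 0; i^-1; i]] r) c.

(* g = <v1, v2> (as rows), V = <v1, v2, v3> *)
Definition flag_g (F : fieldType) (Z : 'M[F]_(4, 3)) : 'M[F]_(2, 4) :=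
  \matrix_(c < 2, r < 4) Z r (widen_ord (isT : (2 <= 3)%N) c).
Definition flag_V (F : fieldType) (Z : 'M[F]_(4, 3)) : 'M[F]_(3, 4) := Z^T.

From Pilot Require Import Defs.
From HB Require Import structures.
From mathcomp Require Import all_boot all_order all_algebra.
From mathcomp Require Import ring.
Set Implicit Arguments. Unset Strict Implicit. Unset Printing Implicit Defensive.
Import GRing.Theory.
Local Open Scope ring_scope.

(* Label the row pairs of the associated array by [Row] (coordinates x_1, x_2),
   [Col] (x_3, x_4) and [Sol t] (digits of the solution generated by Z_t).  Two
   locations x, y agree on the first row of a pair iff y - x lies in a hyperplane
   H_K, and on both rows iff y - x lies in a plane G_K of H_K (for [Sol t] these
   are V_t and g_t).  The hyperplanes are x_1 = 0, x_3 = 0 and the kernels of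
   d |-> c_d(t) for a cubic c_d whose coefficients are linear in d; reading
   [Row], [Col], [Sol t] as the points oo, 0, t of the projective line, every
   H_K is the root condition of c_d at that point, so d <> 0 lies on at most
   three of them.  The hypotheses i + j <> 0 and i j <> -1 are exactly what makes
   G_K, G_L independent and G_K, H_L, H_N meet only in 0 for distinct K, L, N.
   Hence for d <> 0 the number of H_K containing d plus the number of G_K
   containing d is at most 3, so any four top-justified rows separate locations,
   which by counting is the OOA property; orthogonality of two solutions is
   the fact that G_K and G_L meet only in 0. *)

Section Coordinates.
Variable F : fieldType.

Definition vec2 (a b : F) : 'rV[F]_2 := \row_(j < 2) nth 0 [:: a; b] j.
Definition vec3 (a b c : F) : 'rV[F]_3 := \row_(j < 3) nth 0 [:: a; b; c] j.
Definition vec4 (a b c e : F) : 'rV[F]_4 := \row_(j < 4) nth 0 [:: a; b; c; e] j.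

Lemma ord4_ind (P : 'I_4 -> Prop) : P c0 -> P c1 -> P c2 -> P c3 -> forall j, P j.
Proof.
move=> P0 P1 P2 P3 [[|[|[|[|j]]]] lt_j4] //.
- by rewrite (_ : Ordinal _ = c0) //; apply: val_inj.
- by rewrite (_ : Ordinal _ = c1) //; apply: val_inj.
- by rewrite (_ : Ordinal _ = c2) //; apply: val_inj.
- by rewrite (_ : Ordinal _ = c3) //; apply: val_inj.
Qed.

Lemma vec2_eta (v : 'rV[F]_2) : v = vec2 (v ord0 ord0) (v ord0 ord_max).
Proof.
by apply/rowP => -[[|[|j]] lt_j2] //; rewrite !mxE /=; congr (v _ _); apply: val_inj.
Qed.

Lemma vec3_eta (v : 'rV[F]_3) : v = vec3 (v ord0 ord0) (v ord0 1) (v ord0 ord_max).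
Proof.
by apply/rowP => -[[|[|[|j]]] lt_j3] //; rewrite !mxE /=; congr (v _ _); apply: val_inj.
Qed.

Lemma vec4_eta (d : 'rV[F]_4) : d = vec4 (d ord0 c0) (d ord0 c1) (d ord0 c2) (d ord0 c3).
Proof. by apply/rowP; apply: ord4_ind; rewrite !mxE. Qed.

Variant vec4_spec : 'rV[F]_4 -> Type := Vec4 a b c e : vec4_spec (vec4 a b c e).

Lemma vec4P (d : 'rV[F]_4) : vec4_spec d.
Proof. by rewrite [d]vec4_eta. Qed.

Lemma vec4_eq0 (a b c e : F) : a = 0 -> b = 0 -> c = 0 -> e = 0 -> vec4 a b c e = 0.
Proof. by move=> -> -> -> ->; apply/rowP; apply: ord4_ind; rewrite !mxE. Qed.

End Coordinates.

Section FlagZ.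
Variables (F : fieldType) (t : F).

Lemma mul_flag_g (a b : F) : vec2 a b *m flag_g (Zmat t) = vec4 a b (t * a + b) (b / t).
Proof. by apply/rowP; apply: ord4_ind; rewrite !mxE !big_ord_recr big_ord0 /= !mxE /=; ring. Qed.

Lemma mul_flag_V (a b c : F) :
  vec3 a b c *m flag_V (Zmat t) = vec4 a (b + c) (t * a + b) (b / t + t * c).
Proof. by apply/rowP; apply: ord4_ind; rewrite !mxE !big_ord_recr big_ord0 /= !mxE /=; ring. Qed.

Lemma flag_g_sub_V : (flag_g (Zmat t) <= flag_V (Zmat t))%MS.
Proof.
apply/submxP; exists (pid_mx 2); apply/matrixP => i j.
by rewrite !mxE !big_ord_recr big_ord0 /= !mxE; case: i => -[|[|i]] //= _; ring.
Qed.

Hypothesis t_neq0 : t != 0.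

Lemma rank_flag_g : \rank (flag_g (Zmat t)) = 2%N.
Proof.
apply/eqP; apply: inj_row_free => v; rewrite [v]vec2_eta mul_flag_g.
move/rowP=> v0; have := v0 c0; have := v0 c1; rewrite !mxE /= => -> ->.
by apply/rowP => -[[|[|j]] lt_j2] //; rewrite !mxE.
Qed.

Lemma rank_flag_V : \rank (flag_V (Zmat t)) = 3%N.
Proof.
apply/eqP; apply: inj_row_free => v; rewrite [v]vec3_eta mul_flag_V.
set a := v _ _; set b := v _ _; set c := v _ _ => /rowP v0.
move: (v0 c0) (v0 c1) (v0 c2); rewrite !mxE /= => a0 bc0.
rewrite a0 mulr0 add0r => b0; move: bc0; rewrite b0 add0r => c_0.
by apply/rowP => -[[|[|[|j]]] lt_j3] //; rewrite !mxE.
Qed.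

End FlagZ.

Inductive block (F : Type) := Row | Col | Sol of F.
Arguments Row {F}. Arguments Col {F}.

Lemma Sol_neq (F : eqType) (t u : F) : Sol t <> Sol u -> t != u.
Proof. by move=> neq_tu; apply/eqP => eq_tu; apply: neq_tu; rewrite eq_tu. Qed.

Lemma neq_Sol (F : eqType) (t u : F) : t != u -> Sol t <> Sol u.
Proof. by move=> neq_tu [eq_tu]; rewrite eq_tu eqxx in neq_tu. Qed.

Definition cubic (F : fieldType) (d : 'rV[F]_4) (t : F) : F :=
  - d ord0 c0 * t ^+ 3 + (d ord0 c2 - d ord0 c1) * t ^+ 2
  + (d ord0 c0 + d ord0 c3) * t - d ord0 c2.

(* Agreement on the first row, resp. on both rows, of the row pair [K], for two
   locations with difference [d]. *)
Definition hyper (F : fieldType) (K : block F) (d : 'rV[F]_4) : bool :=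
  match K with
  | Row => d ord0 c0 == 0
  | Col => d ord0 c2 == 0
  | Sol t => cubic d t == 0
  end.

Definition plane (F : fieldType) (K : block F) (d : 'rV[F]_4) : bool :=
  match K with
  | Row => (d ord0 c0 == 0) && (d ord0 c1 == 0)
  | Col => (d ord0 c2 == 0) && (d ord0 c3 == 0)
  | Sol t => (d ord0 c2 == t * d ord0 c0 + d ord0 c1) && (d ord0 c3 == d ord0 c1 / t)
  end.

Lemma sub_flag_g (F : fieldType) (t : F) (d : 'rV[F]_4) :
  t != 0 -> (d <= flag_g (Zmat t))%MS = plane (Sol t) d.
Proof.
move=> t_neq0; apply/submxP/idP => [[v ->] | /andP[/eqP d2 /eqP d3]].
  by rewrite [v]vec2_eta mul_flag_g /= !mxE /= !eqxx.
by exists (vec2 (d ord0 c0) (d ord0 c1)); rewrite mul_flag_g -d2 -d3 -vec4_eta.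
Qed.

Lemma sub_flag_V (F : fieldType) (t : F) (d : 'rV[F]_4) :
  t != 0 -> (d <= flag_V (Zmat t))%MS -> hyper (Sol t) d.
Proof.
move=> t_neq0 /submxP[v ->]; rewrite [v]vec3_eta mul_flag_V /= /cubic !mxE /=.
by apply/eqP; field.
Qed.

Section Blocks.
Variables (F : fieldType) (S : {pred F}).
Hypothesis S_neq0 : 0 \notin S.
Hypothesis S_sum_prod :
  forall i j, i \in S -> j \in S -> i != j -> (i + j != 0) && (i * j != -1).

Definition valid (K : block F) : bool := if K is Sol t then t \in S else true.

Lemma valid_Sol_neq0 t : valid (Sol t) -> t != 0.
Proof. by move=> tS; apply: contraNneq S_neq0 => <-. Qed.

Lemma Sol_sum_neq0 t u : valid (Sol t) -> valid (Sol u) -> Sol t <> Sol u -> t + u != 0.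
Proof. by move=> tS uS /Sol_neq /(S_sum_prod tS uS) /andP[]. Qed.

Lemma Sol_prod_neq0 t u : valid (Sol t) -> valid (Sol u) -> Sol t <> Sol u -> t * u + 1 != 0.
Proof. by move=> tS uS /Sol_neq /(S_sum_prod tS uS) /andP[_]; rewrite addr_eq0. Qed.

Lemma plane_hyper K d : valid K -> plane K d -> hyper K d.
Proof.
case: K => [||t] /= vK /andP[/eqP eq_1 /eqP eq_2]; rewrite /cubic ?eq_1 ?eq_2 //.
by apply/eqP; field; apply: valid_Sol_neq0.
Qed.

Lemma plane_Sol_inter t L d :
  valid (Sol t) -> valid L -> Sol t <> L -> plane (Sol t) d -> plane L d -> d = 0.
Proof.
move=> vt vL ntL; have t0 := valid_Sol_neq0 vt.
case: d / vec4P => a b c e; rewrite /plane !mxE /= => /andP[/eqP-> /eqP->].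
case: L vL ntL => [||u] vL ntL /=.
- by case/andP=> /eqP-> /eqP->; apply: vec4_eq0; ring.
- case/andP=> ab0; rewrite mulf_eq0 invr_eq0 (negbTE t0) orbF => /eqP b0.
  move: ab0; rewrite b0 addr0 mulf_eq0 (negbTE t0) => /eqP a0.
  by rewrite a0; apply: vec4_eq0; ring.
- have tu : t - u != 0 by rewrite subr_eq0 Sol_neq.
  case/andP=> /eqP; rewrite (addrC (u * a)) (addrC (t * a)) => /addrI/eqP.
  rewrite -subr_eq0 -mulrBl mulf_eq0 (negbTE tu) => /eqP a0 /eqP b_tu.
  have b0 : b = 0.
    apply: (mulfI tu); rewrite mulr0.
    have u0 := valid_Sol_neq0 vL.
    have -> : (t - u) * b = t * u * (b / u - b / t) by field; rewrite t0 u0.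
    by rewrite b_tu subrr mulr0.
  by rewrite a0 b0; apply: vec4_eq0; ring.
Qed.

Lemma plane_inter K L d : valid K -> valid L -> K <> L -> plane K d -> plane L d -> d = 0.
Proof.
move=> vK vL nKL dK dL; case: K vK nKL dK => [||t] vK nKL dK; last first.
  exact: plane_Sol_inter vK vL nKL dK dL.
all: case: L vL nKL dL => [||u] vL nKL dL; try by case: nKL.
all: try by apply: (plane_Sol_inter vL vK) dL dK => /esym.
all: move: dK dL; case: d / vec4P => a b c e; rewrite /plane !mxE /=.
all: by move=> /andP[/eqP-> /eqP->] /andP[/eqP-> /eqP->]; apply: vec4_eq0.
Qed.

Definition plane_coords (K : block F) (d : 'rV[F]_4) : F * F :=
  match K with
  | Row => (d ord0 c2, d ord0 c3)
  | Col => (d ord0 c0, d ord0 c1)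
  | Sol t => (d ord0 c0, d ord0 c1 / t)
  end.

Definition hyper_coef (K L : block F) : F * F :=
  match K, L with
  | Row, Sol u => (u ^+ 2 - 1, u)
  | Col, Sol u => (1 - u ^+ 2, - u)
  | Sol _, Col => (1, 1)
  | Sol _, Sol u => (1 - u ^+ 2, 1)
  | _, _ => (1, 0) (* also the junk value for K = L *)
  end.

Lemma eq0_scale (k x y : F) : k != 0 -> x = k * y -> (x == 0) = (y == 0).
Proof. by move=> k_neq0 ->; rewrite mulf_eq0 (negbTE k_neq0). Qed.

Lemma hyper_on_plane K L d : valid K -> valid L -> K <> L -> plane K d ->
  hyper L d = ((hyper_coef K L).1 * (plane_coords K d).1
                + (hyper_coef K L).2 * (plane_coords K d).2 == 0).
Proof.
case: d / vec4P => a b c e vK vL nKL; rewrite /plane /hyper /cubic !mxE /=.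
case: K L vK vL nKL => [||t] [||u] //= vK vL nKL; try by case: nKL.
all: move=> /andP[/eqP-> /eqP->]; rewrite !mxE /=.
all: try by apply: (eq0_scale (oner_neq0 F)); ring.
- by apply: (eq0_scale (valid_Sol_neq0 vL)); ring.
- have t0 := valid_Sol_neq0 vK.
  by apply: (eq0_scale t0); field.
- have t0 := valid_Sol_neq0 vK.
  have ut : u - t != 0 by rewrite subr_eq0 Sol_neq // => /esym.
  by apply: (eq0_scale ut); field.
Qed.

Definition det2 (p q : F * F) : F := p.1 * q.2 - p.2 * q.1.

Lemma lin2_eq0 (p q : F * F) (x y : F) : det2 p q != 0 ->
  p.1 * x + p.2 * y = 0 -> q.1 * x + q.2 * y = 0 -> x = 0 /\ y = 0.
Proof.
move=> det_neq0 eq_p eq_q; split; apply: (mulIf det_neq0); rewrite mul0r.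
  have -> : x * det2 p q = q.2 * (p.1 * x + p.2 * y) - p.2 * (q.1 * x + q.2 * y).
    by rewrite /det2; ring.
  by rewrite eq_p eq_q !mulr0 subrr.
have -> : y * det2 p q = p.1 * (q.1 * x + q.2 * y) - q.1 * (p.1 * x + p.2 * y).
  by rewrite /det2; ring.
by rewrite eq_p eq_q !mulr0 subrr.
Qed.

Lemma hyper_coef_det K L N : valid K -> valid L -> valid N ->
  K <> L -> K <> N -> L <> N -> det2 (hyper_coef K L) (hyper_coef K N) != 0.
Proof.
case: K L N => [||t] [||u] [||w] //= vK vL vN nKL nKN nLN;
  try by [case: nKL | case: nKN | case: nLN].
all: rewrite /det2 /= ?(mul1r, mulr1, mul0r, mulr0, subr0, sub0r, opprK, oppr_eq0, oner_eq0) //.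
all: try exact: valid_Sol_neq0.
- rewrite (_ : _ - _ = (u - w) * (u * w + 1)); last by ring.
  by rewrite mulf_neq0 ?Sol_prod_neq0 //; rewrite subr_eq0 Sol_neq.
- rewrite (_ : _ - _ = (u - w) * (u * w + 1)); last by ring.
  by rewrite mulf_neq0 ?Sol_prod_neq0 //; rewrite subr_eq0 Sol_neq.
- by rewrite (_ : _ - _ = w * w) ?mulf_neq0 ?(valid_Sol_neq0 vN) //; ring.
- by rewrite (_ : _ - _ = - (u * u)) ?oppr_eq0 ?mulf_neq0 ?(valid_Sol_neq0 vL) //; ring.
- rewrite (_ : _ - _ = (w - u) * (w + u)); last by ring.
  have nwu : Sol w <> Sol u by move=> /esym.
  by rewrite mulf_neq0 ?(Sol_sum_neq0 vN vL nwu) // subr_eq0 Sol_neq.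
Qed.

Lemma plane_coords_eq0 K d :
  valid K -> plane K d -> plane_coords K d = (0, 0) -> d = 0.
Proof.
case: d / vec4P => a b c e vK; rewrite /plane !mxE /=.
case: K vK => [||t] vK /andP[/eqP-> /eqP->]; rewrite /= !mxE /= => -[x0 y0].
- by rewrite x0 y0; apply: vec4_eq0.
- by rewrite x0 y0; apply: vec4_eq0.
have t0 := valid_Sol_neq0 vK.
have b0 : b = 0 by move/eqP: y0; rewrite mulf_eq0 invr_eq0 (negbTE t0) orbF => /eqP.
by rewrite x0 b0; apply: vec4_eq0; ring.
Qed.

Lemma plane_hyper2_eq0 K L N d : valid K -> valid L -> valid N ->
  K <> L -> K <> N -> L <> N -> plane K d -> hyper L d -> hyper N d -> d = 0.
Proof.
move=> vK vL vN nKL nKN nLN dK.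
rewrite (hyper_on_plane vK vL nKL dK) (hyper_on_plane vK vN nKN dK) => /eqP dL /eqP dN.
apply: plane_coords_eq0 dK _ => //.
move: dL dN; case: plane_coords => x y /= dL dN.
by have [-> ->] := lin2_eq0 (hyper_coef_det vK vL vN nKL nKN nLN) dL dN.
Qed.

End Blocks.

Lemma card_option_set (T : finType) (P : pred (option T)) :
  #|[set p | P p]| = (P None + #|[set t | P (Some t)]|)%N.
Proof.
rewrite (cardsD1 None) inE; congr (_ + _)%N.
rewrite -[RHS](card_imset _ (@Some_inj _)); apply: eq_card => -[t|]; rewrite !inE /=.
  by rewrite mem_imset ?inE //; exact: Some_inj.
by apply/esym/imsetP => -[].
Qed.

(* [option F] is the projective line: [None] is the point at infinity, where the
   root condition is the vanishing of the leading coefficient of [cubic d]. *)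
Definition on_hyper (F : fieldType) (d : 'rV[F]_4) (p : option F) : bool :=
  if p is Some t then cubic d t == 0 else d ord0 c0 == 0.

Lemma card_on_hyper (F : finFieldType) (d : 'rV[F]_4) :
  d != 0 -> (#|[set p | on_hyper d p]| <= 3)%N.
Proof.
move=> d_neq0; rewrite card_option_set /=.
pose P := \poly_(j < 4)
  [:: - d ord0 c2; d ord0 c0 + d ord0 c3; d ord0 c2 - d ord0 c1; - d ord0 c0]`_j.
have P_cubic t : P.[t] = cubic d t.
  by rewrite horner_poly !big_ord_recr big_ord0 /= /cubic; ring.
have P_neq0 : P != 0.
  apply: contra_neq d_neq0 => P0; rewrite [d]vec4_eta.
  have coef0 j : P`_j = 0 by rewrite P0 coef0.
  move: (coef0 0%N) (coef0 1%N) (coef0 2%N) (coef0 3%N); rewrite !coef_poly /=.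
  move=> e2 e03 e21 e0.
  have d0 : d ord0 c0 = 0 by rewrite -[LHS]opprK e0 oppr0.
  have d2 : d ord0 c2 = 0 by rewrite -[LHS]opprK e2 oppr0.
  apply: vec4_eq0 => //; last by rewrite -e03 d0 add0r.
  by apply/eqP; rewrite -oppr_eq0 -e21 d2 sub0r.
have roots_lt : (#|[set t | cubic d t == 0%R]| < size P)%N.
  rewrite cardE; apply: max_poly_roots => //; last exact: enum_uniq.
  by apply/allP => t; rewrite mem_enum inE /root P_cubic.
case: eqP => [d0 | _]; last by rewrite -ltnS (leq_trans roots_lt) ?size_poly.
suff : (size P <= 3)%N by move: roots_lt; rewrite add1n; apply: leq_trans.
apply/leq_sizeP => j le3j; rewrite coef_poly; case: ltnP => // lt_j4.
by rewrite (_ : j = 3%N) /= ?d0 ?oppr0 //; apply/eqP; rewrite eqn_leq -ltnS lt_j4 le3j.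
Qed.

Definition point (F : fieldType) (K : block F) : option F :=
  match K with Row => None | Col => Some 0 | Sol t => Some t end.

Lemma hyper_point (F : fieldType) (K : block F) d : hyper K d = on_hyper d (point K).
Proof.
case: K => //=; rewrite (_ : cubic d 0 = - d ord0 c2) ?oppr_eq0 //.
by rewrite /cubic; ring.
Qed.

Section Labelling.
Variables (F : finFieldType) (S : {pred F}).
Hypothesis S_neq0 : 0 \notin S.
Hypothesis S_sum_prod :
  forall i j, i \in S -> j \in S -> i != j -> (i + j != 0) && (i * j != -1).
Variables (I : finType) (label : I -> block F).
Hypothesis label_inj : injective label.
Hypothesis label_valid : forall i, valid S (label i).

Lemma label_neq i j : i != j -> label i <> label j.
Proof. by move=> nij /label_inj eq_ij; rewrite eq_ij eqxx in nij. Qed.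

Lemma point_label_inj : injective (fun i => point (label i)).
Proof.
move=> i j eq_ij; apply: label_inj; move: eq_ij (label_valid i) (label_valid j).
case: (label i) => [||t]; case: (label j) => [||u] //= [].
- by move=> <-; rewrite (negbTE S_neq0).
- by move=> ->; rewrite (negbTE S_neq0).
- by move=> ->.
Qed.

Lemma card_hyper_plane d : d != 0 ->
  (#|[set i | hyper (label i) d]| + #|[set i | plane (label i) d]| <= 3)%N.
Proof.
move=> d_neq0.
set H := [set i | hyper _ d]; set G := [set i | plane _ d].
have GH : G \subset H.
  by apply/subsetP => i; rewrite !inE; apply: (plane_hyper S_neq0 (label_valid i)).
have H3 : (#|H| <= 3)%N.
  rewrite -(card_imset _ point_label_inj); apply: leq_trans (card_on_hyper d_neq0).
  apply/subset_leq_card/subsetP => _ /imsetP[i + ->]; rewrite !inE.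
  by rewrite hyper_point.
have [G0 | [i Gi]] := set_0Vmem G; first by rewrite G0 cards0 addn0.
have G1 : (#|G| <= 1)%N.
  apply/card_le1_eqP => j k; rewrite !inE => Gj Gk; case: (eqVneq j k) => // njk.
  case/eqP: d_neq0.
  exact: (plane_inter S_neq0 (label_valid j) (label_valid k) (label_neq njk) Gj Gk).
have Hi1 : (#|H :\ i| <= 1)%N.
  apply/card_le1_eqP => j k; rewrite !inE => /andP[nji Hj] /andP[nki Hk].
  case: (eqVneq j k) => // njk; case/eqP: d_neq0.
  have [nij nik] : i != j /\ i != k by rewrite ![i == _]eq_sym.
  move: Gi; rewrite inE => Gi.
  exact: (plane_hyper2_eq0 S_neq0 S_sum_prod (label_valid i) (label_valid j) (label_valid k)
    (label_neq nij) (label_neq nik) (label_neq njk) Gi Hj Hk).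
rewrite (cardsD1 i H) (subsetP GH i Gi) add1n addSn ltnS.
exact: leq_add Hi1 G1.
Qed.
End Labelling.

Lemma card_fiber_inj (C D : finType) (h : C -> D) :
  injective h -> (#|D| <= #|C|)%N -> forall y, #|[set x | h x == y]| = 1%N.
Proof.
move=> h_inj card_DC y; have /codomP[x ->] := inj_card_onto h_inj card_DC y.
apply/eqP/cards1P; exists x; apply/setP => x'; rewrite !inE.
by apply/eqP/eqP => [/h_inj | ->].
Qed.

Lemma card_separating (R C : finType) (T : {set R}) (v : nat) (A : R -> C -> nat) :
  (forall r c, A r c < v)%N -> (v ^ #|T| <= #|C|)%N ->
  (forall c c', (forall r, r \in T -> A r c = A r c') -> c = c') ->
  forall f : R -> 'I_v, #|[set c | [forall r in T, A r c == f r]]| = 1%N.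
Proof.
move=> A_lt card_C separating f.
pose h c := [ffun r : {r | r \in T} => Ordinal (A_lt (val r) c)].
have h_inj : injective h.
  move=> c c' /ffunP eq_h; apply: separating => r rT.
  by have := congr1 val (eq_h (exist _ r rT)); rewrite !ffunE.
rewrite -(card_fiber_inj h_inj _ [ffun r => f (val r)]); last first.
  by rewrite card_ffun card_ord card_sig (@eq_card _ _ T).
apply: eq_card => c; rewrite !inE; apply/forall_inP/eqP => [agree | eq_h r rT].
  by apply/ffunP => r; rewrite !ffunE; apply: val_inj; apply/eqP/agree/valP.
have := congr1 (fun g : {ffun {r | r \in T} -> 'I_v} => val (g (exist _ r rT))) eq_h.
by rewrite /= !ffunE => /eqP.
Qed.

Lemma card_coset_coords (F : finFieldType) (g : 'M[F]_(2, 4)) (i j : 'I_4)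
    (x : 'rV[F]_4) (a b : F) :
  row_free g -> (forall d : 'rV[F]_4, (d <= g)%MS -> d ord0 i = 0 -> d ord0 j = 0 -> d = 0) ->
  #|[set y | in_coset g x y & (y ord0 i == a) && (y ord0 j == b)]| = 1%N.
Proof.
move=> g_free g_transversal.
pose h (v : 'rV[F]_2) := ((x + v *m g) ord0 i, (x + v *m g) ord0 j).
have h_inj : injective h.
  move=> v w [+ +]; rewrite !mxE => /addrI eq_i /addrI eq_j.
  apply: (row_free_inj g_free); apply/eqP; rewrite -subr_eq0 -mulmxBl.
  by apply/eqP/g_transversal; rewrite ?submxMl // mulmxBl !mxE ?eq_i ?eq_j subrr.
have card_le : (#|{: F * F}| <= #|{: 'rV[F]_2}|)%N by rewrite card_prod card_mx mul1n.
have /codomP[v hv] := inj_card_onto h_inj card_le (a, b).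
apply/eqP/cards1P; exists (x + v *m g); apply/setP => y; rewrite !inE.
apply/andP/eqP => [[/submxP[w y_w] /andP[/eqP y_i /eqP y_j]] | ->].
  have y_eq : y = x + w *m g by rewrite -y_w addrC subrK.
  have hw : h w = (a, b) by rewrite /h -y_eq y_i y_j.
  by rewrite y_eq (h_inj w v) // hw hv.
split; first by rewrite /in_coset (addrC x) addrK submxMl.
by move: hv; rewrite /h => -[-> ->]; rewrite !eqxx.
Qed.

Lemma Zmat_sudoku_flag (F : finFieldType) (t : F) :
  t != 0 -> sudoku_flag (flag_g (Zmat t)) (flag_V (Zmat t)).
Proof.
move=> t0; split; [exact: rank_flag_g | exact: rank_flag_V | exact: flag_g_sub_V |].
have g_free : row_free (flag_g (Zmat t)) by rewrite /row_free rank_flag_g.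
have b0 (b : F) : b / t = 0 -> b = 0.
  by move/eqP; rewrite mulf_eq0 invr_eq0 (negbTE t0) orbF => /eqP.
move=> x a b; split; apply: card_coset_coords => // _ /submxP[v ->].
all: rewrite [v]vec2_eta mul_flag_g !mxE /=; set a' := v _ _; set b' := v _ _.
- by move=> -> ->; apply: vec4_eq0; ring.
- move=> + /b0 b'0; rewrite b'0 addr0 => /eqP; rewrite mulf_eq0 (negbTE t0) => /eqP ->.
  by apply: vec4_eq0; ring.
- by move=> ->; rewrite mulr0 add0r => b'0; rewrite b'0; apply: vec4_eq0; ring.
Qed.

Lemma in_coset_refl (F : fieldType) m (A : 'M[F]_(m, 4)) x : in_coset A x x.
Proof. by rewrite /in_coset subrr sub0mx. Qed.

Section Generated.
Variables (F : finFieldType) (m1 m2 : nat) (g : 'M[F]_(m1, 4)) (V : 'M[F]_(m2, 4)).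
Variable M : 'rV[F]_4 -> 'I_(#|F| ^ 2).
Hypothesis M_gen : generated_by g V M.

Lemma generated_sym_eq x y : (M x == M y) = in_coset g x y.
Proof.
case: M_gen => _ cosets_g _; have [s /setP coset_x] := cosets_g x.
have := coset_x x; rewrite !inE in_coset_refl => /esym/eqP Mx.
by have := coset_x y; rewrite !inE => ->; rewrite Mx eq_sym.
Qed.

Lemma generated_radix_eq x y : (radix (M x) == radix (M y)) = in_coset V x y.
Proof.
case: M_gen => _ _ cosets_V; have [r /setP coset_x] := cosets_V x.
have := coset_x x; rewrite !inE in_coset_refl => /esym/eqP Mx.
by have := coset_x y; rewrite !inE => ->; rewrite Mx eq_sym.
Qed.

End Generated.

Lemma radix_units_inj (T : finType) (s s' : 'I_(#|T| ^ 2)) :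
  radix s = radix s' -> units s = units s' -> s = s'.
Proof.
rewrite /radix /units => eq_radix eq_units; apply: val_inj.
by rewrite /= (divn_eq s #|T|) (divn_eq s' #|T|) eq_radix eq_units.
Qed.

Section SudokuFamily.
Variables (F : finFieldType) (S : {set F}) (e : F -> 'I_#|F|).
Variable M : F -> 'rV[F]_4 -> 'I_(#|F| ^ 2).
Hypothesis e_bij : bijective e.
Hypothesis S_neq0 : 0 \notin S.
Hypothesis S_sum_prod :
  forall i j, i \in S -> j \in S -> i != j -> (i + j != 0) && (i * j != -1).
Hypothesis M_gen :
  forall i, i \in S -> generated_by (flag_g (Zmat i)) (flag_V (Zmat i)) (M i).

Lemma sym_eq_plane i x y : i \in S -> M i x = M i y -> plane (Sol i) (y - x).
Proof.
move=> iS /eqP; rewrite (generated_sym_eq (M_gen iS)) /in_coset sub_flag_g //.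
exact: (valid_Sol_neq0 (S := S)).
Qed.

Lemma radix_eq_hyper i x y : i \in S -> radix (M i x) = radix (M i y) -> hyper (Sol i) (y - x).
Proof.
move=> iS /eqP; rewrite (generated_radix_eq (M_gen iS)); apply: sub_flag_V.
exact: (valid_Sol_neq0 (S := S)).
Qed.

Lemma generated_inj : {in S &, injective M}.
Proof.
move=> i j iS jS Mij; apply/eqP/negPn/negP => nij.
pose d := vec2 1 0 *m flag_g (Zmat i).
have Mi_d : M i 0 = M i d.
  by apply/eqP; rewrite (generated_sym_eq (M_gen iS)) /in_coset subr0 submxMl.
have Mj_d : M j 0 = M j d by rewrite -Mij.
have := plane_inter (S := S) (K := Sol i) (L := Sol j) S_neq0 iS jS (neq_Sol nij)
  (sym_eq_plane iS Mi_d) (sym_eq_plane jS Mj_d).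
by rewrite subr0 /d mul_flag_g => /rowP/(_ c0); rewrite !mxE /=; apply/eqP/oner_neq0.
Qed.

Lemma generated_orthogonal i j : i \in S -> j \in S -> i != j -> Defs.orthogonal (M i) (M j).
Proof.
move=> iS jS nij s s'.
pose h y := (M i y, M j y).
have h_inj : injective h.
  move=> y y' [eq_i eq_j]; apply/eqP; rewrite eq_sym -subr_eq0; apply/eqP.
  exact: (plane_inter (S := S) (K := Sol i) (L := Sol j) S_neq0 iS jS (neq_Sol nij)
    (sym_eq_plane iS eq_i) (sym_eq_plane jS eq_j)).
have card_le : (#|{: 'I_(#|F| ^ 2) * 'I_(#|F| ^ 2)}| <= #|{: 'rV[F]_4}|)%N.
  by rewrite card_prod !card_ord card_mx -expnD.
apply: etrans (card_fiber_inj h_inj card_le (s, s')).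
by apply: eq_card => y; rewrite !inE.
Qed.

Let sol (k : 'I_#|S|) := M (enum_val k).
Let A := assoc_array e sol.

Definition block_of (i : 'I_(2 + #|S|)) : block F :=
  match split i with
  | inl a => if val a == 0%N then Row else Col
  | inr k => Sol (enum_val k)
  end.

Lemma block_of_valid i : valid S (block_of i).
Proof. by rewrite /block_of; case: (split i) => [a|k] /=; [case: ifP | exact: enum_valP]. Qed.

Lemma block_of_inj : injective block_of.
Proof.
move=> i j; rewrite /block_of -{2}[i]splitK -{2}[j]splitK.
case: (split i) => [a|k]; case: (split j) => [b|l] //=; try by case: ifP.
- by case: a b => -[|[|a]] lt_a2 // [[|[|b]] lt_b2] //= _; congr (unsplit (inl _)); apply: val_inj.
- by case=> /enum_val_inj ->.
Qed.

Lemma assoc_hyper x y i : A i ord0 x = A i ord0 y -> hyper (block_of i) (y - x).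
Proof.
rewrite /A /assoc_array /block_of; case: (split i) => [a|k] /=.
  by case: ifP => _ /val_inj/(bij_inj e_bij) eq_xy; rewrite /= !mxE eq_xy subrr.
exact: radix_eq_hyper (enum_valP k).
Qed.

Lemma assoc_plane x y i : A i ord0 x = A i ord0 y -> A i ord_max x = A i ord_max y ->
  plane (block_of i) (y - x).
Proof.
rewrite /A /assoc_array /block_of; case: (split i) => [a|k] /= eq_0 eq_1.
  move: eq_0 eq_1; case: ifP => _ /val_inj/(bij_inj e_bij) eq_0 /val_inj/(bij_inj e_bij) eq_1;
  by rewrite /= !mxE eq_0 eq_1 !subrr eqxx.
exact: sym_eq_plane (enum_valP k) (radix_units_inj eq_0 eq_1).
Qed.

Lemma assoc_OOA : OOA4 #|F| A.
Proof.
have q_gt0 : (0 < #|F|)%N by apply/card_gt0P; exists 0.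
have A_lt i j c : (A i j c < #|F|)%N.
  rewrite /A /assoc_array; case: (split i) => [a|k]; first by do 2 case: ifP.
  case: ifP => _; last by rewrite /units ltn_pmod.
  by rewrite /radix ltn_divLR // mulnn.
split; [by rewrite card_mx mul1n | exact: A_lt |] => T card_T top_justified f.
apply: (card_separating (v := #|F|) (A := fun r c => A r.1 r.2 c)) => [r c | | x y agree].
- exact: A_lt.
- by rewrite card_T card_mx mul1n.
apply/eqP; rewrite eq_sym -subr_eq0; apply/negPn/negP => d_neq0.
have := card_hyper_plane S_neq0 S_sum_prod block_of_inj block_of_valid d_neq0.
set H := [set i | _]; set G := [set i | _]; apply/negP; rewrite -ltnNge.
have sub_T : T \subset setX H [set ord0] :|: setX G [set ord_max].
  apply/subsetP => -[i j]; have [-> | ->] : j = ord0 \/ j = ord_max.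
    by case: j => -[|[|j]] lt_j2; [left | right |]; try apply: val_inj.
  - by move=> rT; rewrite !inE /= assoc_hyper ?eqxx //; exact: (agree _ rT).
  - move=> rT; rewrite !inE /= assoc_plane ?eqxx ?orbT //; [exact: (agree _ (top_justified _ rT)) | exact: (agree _ rT)].
rewrite -card_T; apply: leq_trans (subset_leq_card sub_T) _.
by rewrite cardsU !cardsX !cards1 !muln1 leq_subr.
Qed.

End SudokuFamily.

Theorem theorem5p4 (F : finFieldType) (S : {set F}) (e : F -> 'I_#|F|)
  (M : F -> 'rV[F]_4 -> 'I_(#|F| ^ 2)) :
  bijective e ->
  0 \notin S ->
  (forall i j, i \in S -> j \in S -> i != j -> (i + j != 0) && (i * j != -1)) ->
  (forall i, i \in S -> generated_by (flag_g (Zmat i)) (flag_V (Zmat i)) (M i)) ->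
  (forall i, i \in S -> sudoku_flag (flag_g (Zmat i)) (flag_V (Zmat i))) /\
  {in S &, injective M} /\
  strongly_orthogonal e (fun k : 'I_#|S| => M (enum_val k)).
Proof.
move=> e_bij S_neq0 S_sum_prod M_gen.
split; first by move=> i iS; apply: Zmat_sudoku_flag; apply: contraNneq S_neq0 => <-.
split; first exact: generated_inj S_neq0 M_gen.
split.
- by move=> k; case: (M_gen _ (enum_valP k)).
- move=> k l nkl; apply: (generated_orthogonal S_neq0 M_gen); rewrite ?enum_valP //.
  by rewrite (inj_eq enum_val_inj).
- exact: assoc_OOA.
Qed.
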